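(* Let $G$ be an ADMG and let $\{x,y\}$, $Z$, $W$ be pairwise disjoint node sets of $G$ (with $x\neq y$ nodes). Then $(Z,W)$ is a valid conditional instrumental set relative to $(x,y)$ in $G$ if and only if all of the following hold: (i) there is no directed path from $x$ to $y$ that contains a node in $W$; (ii) there exists a walk from some node of $Z$ to $x$ that is open given $W$; (iii) there is no walk from a node of $Z$ to $y$ that is open given $W$ and does not end with a segment of the form $x\to\cdots\to y$ (a walk $v_1,\dots,v_r$ with edges $e_1,\dots,e_{r-1}$ ends with such a segment if there is an index $i$ with $v_i=x$ and every edge $e_j$, $j\ge i$, is of the form $v_j\to v_{j+1}$).
   Context: An ADMG $G$ has a finite node set $V$, directed edges $u\to v$ and bidirected edges $u\leftrightarrow v$, such that the subgraph of directed edges has no directed cycle. A walk is a sequence of nodes $v_1,\dots,v_r$ with edges $e_1,\dots,e_{r-1}$, $e_i$ joining $v_i$ and $v_{i+1}$ (nodes may repeat); a path is a walk with distinct nodes. A walk is directed from $v_1$ to $v_r$ if each $e_i$ is $v_i\to v_{i+1}$. $u$ is a parent of $v$ if $u\to v$; $\mathrm{de}_G(v)$ ($\mathrm{an}_G(v)$) is the set of nodes reachable from $v$ by a directed path (from which $v$ is reachable by a directed path), including $v$ itself; for sets take unions. A non-endpoint occurrence $v_i$ ($1<i<r$) on a walk is a collider if both $e_{i-1}$ and $e_i$ have an arrowhead at $v_i$ (each is of the form $\cdot\to v_i$ or $\cdot\leftrightarrow v_i$); otherwise it is a non-collider. A walk is open given $W$ if every collider on it is in $W$ and every non-collider is not in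 $W$. For disjoint sets $A,B,W$, $A\not\perp_G B\mid W$ (d-connected) if some walk from a node of $A$ to a node of $B$ is open given $W$; otherwise $A\perp_G B\mid W$. Let $\mathrm{causal}_G(x,y)=(\mathrm{de}_G(x)\cap\mathrm{an}_G(y))\setminus\{x\}$ and $\mathrm{forb}_G(x,y)=\mathrm{de}_G(\mathrm{causal}_G(x,y))\cup\{x\}$. Let $\tilde G$ be $G$ with all directed edges $x\to c$, $c\in\mathrm{causal}_G(x,y)$, removed. For pairwise disjoint $\{x,y\},Z,W$, $(Z,W)$ is a valid conditional instrumental set relative to $(x,y)$ in $G$ iff (a) $(Z\cup W)\cap\mathrm{forb}_G(x,y)=\emptyset$, (b) $x\not\perp_G Z\mid W$, and (c) $y\perp_{\tilde G} Z\mid W$. *)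

From mathcomp Require Import all_boot.
Set Implicit Arguments. Unset Strict Implicit. Unset Printing Implicit Defensive.

Record ADMG (V : finType) := MkADMG {
  dir : rel V;
  bid : rel V;
  bid_sym : symmetric bid;
  bid_irr : irreflexive bid;
  dir_acyclic : forall u v, dir u v -> ~~ connect dir v u
}.

(* Kind of the edge e_i joining v_i and v_(i+1):
   Fwd : v_i -> v_(i+1);  Bwd : v_i <- v_(i+1);  Bid : v_i <-> v_(i+1). *)
Inductive etype := Fwd | Bwd | Bid.

Definition etype_eqb (a b : etype) : bool :=
  match a, b with Fwd, Fwd | Bwd, Bwd | Bid, Bid => true | _, _ => false end.

Section Walks.
Variable V : finType.

Definition edge_ok (d b : rel V) (u : V) (k : etype) (v : V) : bool :=
  match k with Fwd => d u v | Bwd => d v u | Bid => b u v end.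

(* A walk is a start node u together with the list of steps (e_i, v_(i+1)). *)
Fixpoint is_walk (d b : rel V) (u : V) (s : seq (etype * V)) : bool :=
  match s with
  | [::] => true
  | (k, v) :: s' => edge_ok d b u k v && is_walk d b v s'
  end.

Definition walk_end (u : V) (s : seq (etype * V)) : V := last u (map snd s).

Definition head_at_end (k : etype) : bool :=
  match k with Fwd | Bid => true | Bwd => false end.
Definition head_at_start (k : etype) : bool :=
  match k with Bwd | Bid => true | Fwd => false end.

Definition collider (kin kout : etype) : bool := head_at_end kin && head_at_start kout.

(* openness of the interior occurrences, [v] being an interior node entered by [kin] *)
Fixpoint open_from (W : {set V}) (kin : etype) (v : V) (s : seq (etype * V)) : bool :=
  match s with
  | [::] => true
  | (k, w) :: s' =>
      (if collider kin k then v \in W else v \notin W) && open_from W k w s'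
  end.

Definition open_walk (W : {set V}) (u : V) (s : seq (etype * V)) : bool :=
  match s with
  | [::] => true
  | (k, w) :: s' => open_from W k w s'
  end.

Definition dconn (d b : rel V) (A B W : {set V}) : Prop :=
  exists (u : V) (s : seq (etype * V)),
    [/\ u \in A, walk_end u s \in B, is_walk d b u s & open_walk W u s].

Definition ends_with_dir_seg (x u : V) (s : seq (etype * V)) : bool :=
  has (fun i => (nth u (u :: map snd s) i == x) &&
                all (fun k => etype_eqb k Fwd) (drop i (map fst s)))
      (iota 0 (size s).+1).

End Walks.

Section Causal.
Variables (V : finType) (G : ADMG V).

Definition de (v : V) : {set V} := [set w | connect (dir G) v w].
Definition an (v : V) : {set V} := [set w | connect (dir G) w v].

Definition causal (x y : V) : {set V} := (de x :&: an y) :\ x.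
Definition forb (x y : V) : {set V} :=
  (\bigcup_(c in causal x y) de c) :|: [set x].

Definition dir_tilde (x y : V) : rel V :=
  fun u v => dir G u v && ~~ ((u == x) && (v \in causal x y)).

Definition dsep (A B W : {set V}) : Prop := ~ dconn (dir G) (bid G) A B W.
Definition dsep_tilde (x y : V) (A B W : {set V}) : Prop :=
  ~ dconn (dir_tilde x y) (bid G) A B W.

Definition valid_cond_instr (x y : V) (Z W : {set V}) : Prop :=
  [/\ [disjoint (Z :|: W) & forb x y],
      dconn (dir G) (bid G) [set x] Z W &
      dsep_tilde x y [set y] Z W].

Definition dir_path (x y : V) (p : seq V) : bool :=
  [&& path (dir G) x p, last x p == y & uniq (x :: p)].

End Causal.

From mathcomp Require Import all_boot.
Set Implicit Arguments. Unset Strict Implicit. Unset Printing Implicit Defensive.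

(* Necessity: [W] avoids forb(x, y), so no directed x-y path meets [W].  An open
   walk from [Z] to [y] not ending in [x -> .. -> y] can be made a walk of G~:
   the only edges of G missing in G~ are [x -> c] with [c] causal; one crossed
   forwards would start a final directed run, since an open walk entering a
   descendant of [c] with an arrowhead can only go on forwards (no descendant
   of [c] is in [W]); after one crossed backwards into [c], the walk is rerouted
   along a directed path [c -> .. -> y], which lies in G~.
   Sufficiency: a node [w] of [W] below a causal [c] would yield the open walk
   [z ~> x -> .. -> c -> .. -> w <- .. <- c -> .. -> y], and a node [z] of [Z]
   below [c] the open walk [z <- .. <- c -> .. -> y], both violating (iii);
   and a walk of G~ cannot end with [x -> c -> .. -> y], as [c] would be causal. *)

Definition is_fwd (k : etype) : bool := etype_eqb k Fwd.

Definition flip_etype (k : etype) : etype :=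
  match k with Fwd => Bwd | Bwd => Fwd | Bid => Bid end.

Lemma collider_flip kin k : collider (flip_etype k) (flip_etype kin) = collider kin k.
Proof. by case: kin; case: k. Qed.

Lemma collider_fwd kin : collider kin Fwd = false.
Proof. by case: kin. Qed.

Section PathFacts.
Variables (T : eqType) (e : rel T).

Lemma path_first_in (P : pred T) c p : path e c p -> P (last c p) -> ~~ P c ->
  exists p' w, [/\ path e c (rcons p' w), P w & all (fun a => ~~ P a) (c :: p')].
Proof.
elim: p c => [|a p IH] c /=; first by move=> _ ->.
case/andP=> ca ap Plast nPc; have [Pa | nPa] := boolP (P a).
  by exists [::], a; rewrite /= ca Pa nPc.
have [p' [w [apw Pw nP]]] := IH a ap Plast nPa.
by exists (a :: p'), w; rewrite /= ca apw Pw nPc.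
Qed.

End PathFacts.

Lemma connect_to_last (T : finType) (e : rel T) v p a :
  path e v p -> a \in v :: p -> connect e a (last v p).
Proof.
elim: p v => [|w p IH] v /=; first by move=> _; rewrite inE => /eqP ->.
case/andP=> vw wp; rewrite inE => /orP[/eqP ->|]; last exact: IH.
by apply: connect_trans (connect1 vw) _; apply/connectP; exists p.
Qed.

Section Walks.
Variable V : finType.
Implicit Types (d b : rel V) (W : {set V}) (u v c w : V) (k : etype).
Implicit Types (s t : seq (etype * V)) (p q : seq V).

Lemma walk_end_cat u s t : walk_end u (s ++ t) = walk_end (walk_end u s) t.
Proof. by rewrite /walk_end map_cat last_cat. Qed.

Lemma walk_end_cons u k v s : walk_end u ((k, v) :: s) = walk_end v s.
Proof. by []. Qed.

Lemma walk_end_rcons u s a : walk_end u (rcons s a) = a.2.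
Proof. by rewrite /walk_end map_rcons last_rcons. Qed.

Lemma is_walk_cat d b u s t :
  is_walk d b u (s ++ t) = is_walk d b u s && is_walk d b (walk_end u s) t.
Proof. by elim: s u => [|[k v] s IH] u //=; rewrite IH andbA. Qed.

Lemma is_walk_sub d1 d2 b u s : subrel d1 d2 -> is_walk d1 b u s -> is_walk d2 b u s.
Proof.
move=> sub12; elim: s u => [|[k v] s IH] u //= /andP[uv /IH ->].
by case: k uv => /= [/sub12|/sub12|] ->.
Qed.

Lemma open_from_cat W k v s t :
  open_from W k v (s ++ t) =
  open_from W k v s && open_from W (last k (map fst s)) (walk_end v s) t.
Proof. by elim: s k v => [|[k' w] s IH] k v //=; rewrite IH andbA. Qed.

Lemma open_walkE W u s : u \notin W -> open_walk W u s = open_from W Bwd u s.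
Proof. by case: s => [|[k v] s] //= ->. Qed.

Lemma open_from_walk W k u s : open_from W k u s -> open_walk W u s.
Proof. by case: s => [|[k' v] s] //= /andP[]. Qed.

Fixpoint rev_walk u s : seq (etype * V) :=
  if s is (k, v) :: s' then rcons (rev_walk v s') (flip_etype k, u) else [::].

Lemma walk_end_rev_walk u s : walk_end (walk_end u s) (rev_walk u s) = u.
Proof. by case: s => [|[k v] s] //=; rewrite walk_end_rcons. Qed.

Lemma is_walk_rev_walk d b u s : symmetric b ->
  is_walk d b (walk_end u s) (rev_walk u s) = is_walk d b u s.
Proof.
move=> bsym; elim: s u => [|[k v] s IH] u //=.
rewrite walk_end_cons -cats1 is_walk_cat walk_end_rev_walk IH /= andbT andbC.
by case: k => //=; rewrite bsym.
Qed.

Lemma open_walk_rcons2 W u s a a' :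
  open_walk W u (rcons (rcons s a) a') =
  open_walk W u (rcons s a) && (if collider a.1 a'.1 then a.2 \in W else a.2 \notin W).
Proof.
case: a a' => k v [k' v']; case: s => [|[k0 w] s] /=; first by rewrite andbT.
by rewrite -!cats1 -catA !open_from_cat /= [walk_end _ [:: _]]/walk_end /= !andbT andbA.
Qed.

Lemma open_walk_rev_cons W u k v s :
  open_walk W (walk_end v s) (rev_walk u ((k, v) :: s)) = open_from W k v s.
Proof.
elim: s u k v => [|[k' w] s IH] u k v //=.
by rewrite open_walk_rcons2 IH /= collider_flip andbC.
Qed.

Lemma open_walk_rev_walk W u s :
  open_walk W (walk_end u s) (rev_walk u s) = open_walk W u s.
Proof. by case: s => [|[k v] s] //; rewrite walk_end_cons open_walk_rev_cons. Qed.

Lemma dconn_sym d b A B W : symmetric b -> dconn d b A B W -> dconn d b B A W.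
Proof.
move=> bsym [u [s [uA sB sw so]]]; exists (walk_end u s), (rev_walk u s).
by rewrite walk_end_rev_walk is_walk_rev_walk // open_walk_rev_walk.
Qed.

Lemma dconn1P {d b : rel V} {A W : {set V}} {x : V} : symmetric b ->
  dconn d b [set x] A W <->
  exists z s, [/\ z \in A, walk_end z s = x, is_walk d b z s & open_walk W z s].
Proof.
move=> bsym; split.
  by case/(dconn_sym bsym) => z [s [zA]]; rewrite inE => /eqP; exists z, s.
move=> [z [s [zA sx sw so]]]; apply: dconn_sym => //.
by exists z, s; rewrite inE sx.
Qed.

Definition run k p : seq (etype * V) := [seq (k, a) | a <- p].

(* The walk from [last c p] back to [c] against the directed path [c :: p]. *)
Definition back_run c p := run Bwd (rev (belast c p)).

(* Down the directed path [c :: p] and back: [last c p] is a collider. *)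
Definition detour c p := run Fwd p ++ back_run c p.

Lemma map_snd_run k p : map snd (run k p) = p.
Proof. by rewrite /run -map_comp map_id. Qed.

Lemma walk_end_run u k p : walk_end u (run k p) = last u p.
Proof. by rewrite /walk_end map_snd_run. Qed.

Lemma is_walk_fwd d b u p : is_walk d b u (run Fwd p) = path d u p.
Proof. by elim: p u => //= a p IH u; rewrite IH. Qed.

Lemma is_walk_bwd d b u p : is_walk d b u (run Bwd p) = path (fun a a' => d a' a) u p.
Proof. by elim: p u => //= a p IH u; rewrite IH. Qed.

Lemma open_from_fwd W k u p :
  open_from W k u (run Fwd p) = all (fun a => a \notin W) (belast u p).
Proof. by elim: p k u => //= a p IH k u; rewrite IH collider_fwd. Qed.

Lemma open_from_bwd W u p :
  open_from W Bwd u (run Bwd p) = all (fun a => a \notin W) (belast u p).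
Proof. by elim: p u => //= a p IH u; rewrite IH. Qed.

Lemma walk_end_back_run c p : walk_end (last c p) (back_run c p) = c.
Proof. by rewrite walk_end_run; case: p => //= a p; rewrite rev_cons last_rcons. Qed.

Lemma is_walk_back_run d b c p : is_walk d b (last c p) (back_run c p) = path d c p.
Proof. by rewrite is_walk_bwd rev_path. Qed.

Lemma open_from_back_run W c p :
  all (fun a => a \notin W) (c :: p) -> open_from W Bwd (last c p) (back_run c p).
Proof.
move=> /allP cpW; rewrite open_from_bwd; apply/allP => a /mem_belast.
rewrite inE mem_rev => /orP[/eqP ->|/mem_belast]; apply: cpW => //; exact: mem_last.
Qed.

Lemma walk_end_detour c p : walk_end c (detour c p) = c.
Proof. by rewrite walk_end_cat walk_end_run walk_end_back_run. Qed.

Lemma is_walk_detour d b c p : is_walk d b c (detour c p) = path d c p.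
Proof. by rewrite is_walk_cat is_walk_fwd walk_end_run is_walk_back_run andbb. Qed.

Lemma open_from_fwd_bwd W w c r :
  open_from W Fwd w (run Bwd (rcons r c)) = (w \in W) && all (fun a => a \notin W) r.
Proof.
case: r => [|a r] /=; first by rewrite andbT.
by rewrite -/(run Bwd _) open_from_bwd belast_rcons.
Qed.

Lemma open_from_detour W k c p w :
  open_from W k c (detour c (rcons p w)) =
  all (fun a => a \notin W) (c :: p) && (w \in W).
Proof.
rewrite open_from_cat open_from_fwd walk_end_run /back_run !belast_rcons last_rcons.
rewrite /run map_rcons -/(run Fwd p) map_rcons last_rcons rev_cons -/(run Bwd _).
by rewrite open_from_fwd_bwd all_rev /=; case: (all _ p); rewrite ?andbT ?andbF.
Qed.

Lemma map_snd_detour c p : map snd (detour c p) = p ++ rev (belast c p).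
Proof. by rewrite map_cat !map_snd_run. Qed.

Lemma mem_detour c p u : u \in map snd (detour c p) -> u \in c :: p.
Proof.
rewrite map_snd_detour mem_cat mem_rev => /orP[u_p|/mem_belast //].
by rewrite inE u_p orbT.
Qed.

Lemma detour_not_fwd c p w : ~~ all is_fwd (map fst (detour c (rcons p w))).
Proof.
rewrite /detour /back_run belast_rcons rev_cons /run map_cat !map_rcons.
by rewrite all_cat !all_rcons /= !andbF.
Qed.

Lemma ends_with_dir_seg_nil x u : ends_with_dir_seg x u [::] = (u == x).
Proof. by rewrite /ends_with_dir_seg /= andbT orbF. Qed.

Lemma ends_with_dir_seg_cons x u k v s :
  ends_with_dir_seg x u ((k, v) :: s) =
  (u == x) && all is_fwd (k :: map fst s) || ends_with_dir_seg x v s.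
Proof.
have has_iotaS (P : pred nat) n :
    has P (iota 0 n.+1) = P 0 || has (fun i => P i.+1) (iota 0 n).
  by rewrite /= -[1]/(1 + 0) iotaDl has_map.
rewrite /ends_with_dir_seg [size _]/= has_iotaS; congr orb.
apply: eq_in_has => i; rewrite mem_iota add0n => lt_i_s /=.
by rewrite (set_nth_default v) //= size_map.
Qed.

Lemma ends_with_dir_seg_mem x u s : ends_with_dir_seg x u s -> x \in u :: map snd s.
Proof.
elim: s u => [|[k v] s IH] u; first by rewrite ends_with_dir_seg_nil inE eq_sym.
rewrite ends_with_dir_seg_cons => /orP[/andP[/eqP <- _]|/IH]; first exact: mem_head.
by move=> x_in; rewrite /= inE x_in orbT.
Qed.

Lemma ends_with_dir_seg_catr x u s t : ~~ all is_fwd (map fst t) ->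
  ends_with_dir_seg x u (s ++ t) -> ends_with_dir_seg x (walk_end u s) t.
Proof.
move=> t_not_fwd; elim: s u => [|[k v] s IH] u //.
rewrite cat_cons ends_with_dir_seg_cons walk_end_cons => /orP[/andP[_]|/IH //].
by rewrite /= map_cat all_cat (negbTE t_not_fwd) !andbF.
Qed.

Lemma connect_fwd_walk d b u s :
  is_walk d b u s -> all is_fwd (map fst s) -> connect d u (walk_end u s).
Proof.
elim: s u => [|[k v] s IH] u /=; first by rewrite connect0.
case: k => //= /andP[uv vs] s_fwd.
exact: connect_trans (connect1 uv) (IH v vs s_fwd).
Qed.

(* Leaving [v] by [<-] or [<->] would make [v] a collider, hence a node of [W]. *)
Lemma open_from_desc_fwd d b W kin v s :
  head_at_end kin -> (forall a, connect d v a -> a \notin W) ->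
  is_walk d b v s -> open_from W kin v s -> all is_fwd (map fst s).
Proof.
elim: s kin v => [|[k w] s IH] kin v //= kin_head descW /andP[vw ws] /andP[v_open s_open].
have vW := descW v (connect0 d v).
case: k vw v_open s_open => /= vw v_open s_open.
- apply: IH s_open => // a wa; exact: descW (connect_trans (connect1 vw) wa).
- by rewrite /collider kin_head (negbTE vW) in v_open.
- by rewrite /collider kin_head (negbTE vW) in v_open.
Qed.

End Walks.

Section Dag.
Variables (V : finType) (G : ADMG V).
Local Notation d := (dir G).

Lemma dir_irrefl a : ~~ d a a.
Proof. by apply/negP => aa; move: (dir_acyclic aa); rewrite connect0. Qed.

Lemma connect_dir_antisym a c : connect d a c -> connect d c a -> a = c.
Proof.
case/connectP=> -[|a1 p] //= /andP[aa1 a1p] -> ca.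
have a1a : connect d a1 a by apply: connect_trans ca; apply/connectP; exists p.
by move: (dir_acyclic aa1); rewrite a1a.
Qed.

Lemma in_causal x y c :
  (c \in causal G x y) = [&& connect d x c, connect d c y & c != x].
Proof. by rewrite !inE andbC -andbA. Qed.

Lemma desc_causal_in_forb x y c a :
  c \in causal G x y -> connect d c a -> a \in forb G x y.
Proof.
move=> cC ca; rewrite /forb inE; apply/orP; left.
by apply/bigcupP; exists c => //; rewrite /de inE.
Qed.

End Dag.

Section Main.
Variables (V : finType) (G : ADMG V) (x y : V) (Z W : {set V}).
Local Notation d := (dir G).
Local Notation b := (bid G).
Local Notation dt := (dir_tilde G x y).

Lemma dir_tilde_sub : subrel dt d.
Proof. by move=> u v /andP[]. Qed.

Lemma desc_causal_neq_x c a : c \in causal G x y -> connect d c a -> a != x.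
Proof.
rewrite in_causal => /and3P[xc _ cx] ca; apply: contraNneq cx => ax.
by rewrite ax in ca; rewrite (connect_dir_antisym xc ca).
Qed.

Lemma path_tilde_desc_causal c v p :
  c \in causal G x y -> connect d c v -> path d v p -> path dt v p.
Proof.
move=> cC; elim: p v => //= a p IH v cv /andP[va ap].
rewrite /dir_tilde va (negbTE (desc_causal_neq_x cC cv)) /=.
exact: IH (connect_trans cv (connect1 va)) ap.
Qed.

Lemma tilde_walk_not_ends u s : x != y ->
  is_walk dt b u s -> walk_end u s = y -> ~~ ends_with_dir_seg x u s.
Proof.
move=> xy; elim: s u => [|[k v] s IH] u.
  by move=> _ uy; rewrite ends_with_dir_seg_nil eq_sym -[u]/(walk_end u [::]) uy.
rewrite /= walk_end_cons ends_with_dir_seg_cons => /andP[uv vs] sy.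
rewrite negb_or IH // andbT; apply/negP => /andP[/eqP ux].
case: k uv => //= /andP[xv vC] s_fwd; subst u.
have vy : connect d v y.
  by rewrite -sy; exact: connect_fwd_walk (is_walk_sub dir_tilde_sub vs) s_fwd.
have vx : v != x by apply/eqP => vx; move: (dir_irrefl G x); rewrite -{2}vx xv.
by rewrite eqxx in_causal (connect1 xv) vy vx in vC.
Qed.

Section Necessity.
Hypothesis forb_ZW : [disjoint Z :|: W & forb G x y].

Lemma forb_notin_W a : a \in forb G x y -> a \notin W.
Proof. by apply: contraTN => aW; rewrite (disjointFr forb_ZW) // inE aW orbT. Qed.

Lemma no_dir_path_through_W :
  ~ (exists p, dir_path G x y p /\ has (fun v => v \in W) (x :: p)).
Proof.
move=> [p [/and3P[xp /eqP py _] /hasP[w wp wW]]].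
suff : w \in forb G x y by move/forb_notin_W; rewrite wW.
have [->|wx] := eqVneq w x; first by rewrite /forb inE in_set1 eqxx orbT.
apply: desc_causal_in_forb (connect0 d w).
by rewrite in_causal wx (path_connect xp wp) -py (connect_to_last xp wp).
Qed.

Lemma open_walk_tilde kin v t :
  is_walk d b v t -> open_from W kin v t -> walk_end v t = y ->
  ~~ ends_with_dir_seg x v t ->
  exists t', [/\ is_walk dt b v t', open_from W kin v t' & walk_end v t' = y].
Proof.
elim: t v kin => [|[k w] t IH] v kin; first by exists [::].
rewrite /= walk_end_cons ends_with_dir_seg_cons negb_or.
move=> /andP[vw wt] /andP[v_open t_open] ty /andP[not_here not_later].
have [vw_tilde|] := boolP (edge_ok dt b v k w).
  have [t' [wt' t'_open t'y]] := IH w k wt t_open ty not_later.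
  by exists ((k, w) :: t'); rewrite /= vw_tilde v_open.
case: k vw v_open t_open not_here => /= vw v_open t_open not_here; last by rewrite vw.
- rewrite /dir_tilde vw /= negbK => /andP[/eqP vx wC]; subst v.
  case/negP: not_here; rewrite eqxx /=.
  apply: open_from_desc_fwd wt t_open => // a wa.
  exact: forb_notin_W (desc_causal_in_forb wC wa).
- rewrite /dir_tilde vw /= negbK => /andP[/eqP wx vC].
  move: (vC); rewrite in_causal => /and3P[_ /connectP[p vp py] _].
  exists (run Fwd p); rewrite is_walk_fwd walk_end_run open_from_fwd -py; split => //.
    exact: path_tilde_desc_causal vC (connect0 d v) vp.
  apply/allP => a /mem_belast /(path_connect vp) va.
  exact: forb_notin_W (desc_causal_in_forb vC va).
Qed.

End Necessity.

Section Sufficiency.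
Hypothesis no_dir_path_W :
  ~ (exists p, dir_path G x y p /\ has (fun v => v \in W) (x :: p)).
Hypothesis open_to_x : exists z s,
  [/\ z \in Z, walk_end z s = x, is_walk d b z s & open_walk W z s].
Hypothesis no_open_to_y : ~ (exists z s,
  [/\ z \in Z, walk_end z s = y, is_walk d b z s, open_walk W z s
    & ~~ ends_with_dir_seg x z s]).
Hypothesis ZW : [disjoint Z & W].

Lemma between_notin_W t : connect d x t -> connect d t y -> t \notin W.
Proof.
move=> /connectP[p1 xp1 t1] /connectP[p2 tp2 y2]; apply/negP => tW.
move: t1 y2; case: (shortenP xp1) => q1 xq1 uq1 _ t1.
case: (shortenP tp2) => q2 tq2 uq2 _ y2.
apply: no_dir_path_W; exists (q1 ++ q2); split; last first.
  by apply/hasP; exists t; rewrite // -cat_cons mem_cat t1 mem_last.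
rewrite /dir_path cat_path -t1 xq1 tq2 last_cat -t1 -y2 eqxx -cat_cons cat_uniq uq1 /=.
move: uq2; rewrite cons_uniq => /andP[tq2' ->]; rewrite andbT.
apply/hasPn => a aq2; apply: contra tq2' => aq1.
have a_t : connect d a t by rewrite t1; exact: connect_to_last xq1 aq1.
have t_a : connect d t a by apply: (path_connect tq2); rewrite inE aq2 orbT.
by rewrite -(connect_dir_antisym a_t t_a).
Qed.

Lemma desc_causal_notin_W c a : c \in causal G x y -> connect d c a -> a \notin W.
Proof.
move=> cC /connectP[p cp ->]; apply/negP => pW.
move: (cC); rewrite in_causal => /and3P[xc cy _].
have cW := between_notin_W xc cy.
have [q [w [cqw wW cqW]]] := path_first_in (P := fun a => a \in W) cp pW cW.
have [z [s [zZ sx sw s_open]]] := open_to_x.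
move: (xc) (cy) => /connectP[p1 xp1 c1] /connectP[p3 cp3 y3].
have x_desc u : u \in x :: p1 -> connect d x u /\ connect d u c.
  by move=> u_in; rewrite c1; split; [exact: path_connect u_in | exact: connect_to_last].
have c_desc u : u \in c :: p3 -> connect d x u /\ connect d u y.
  move=> u_in; rewrite y3; split; last exact: connect_to_last.
  exact: connect_trans xc (path_connect cp3 u_in).
apply: no_open_to_y; exists z, ((s ++ run Fwd p1) ++ detour c (rcons q w) ++ run Fwd p3).
have pre_c : walk_end z (s ++ run Fwd p1) = c by rewrite walk_end_cat sx walk_end_run c1.
have zW : z \notin W by rewrite (disjointFr ZW zZ).
split => //.
- by rewrite walk_end_cat pre_c walk_end_cat walk_end_detour walk_end_run -y3.
- rewrite is_walk_cat pre_c is_walk_cat sx is_walk_fwd is_walk_cat walk_end_detour.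
  by rewrite is_walk_detour is_walk_fwd sw xp1 cqw cp3.
- rewrite open_walkE // open_from_cat pre_c open_from_cat -open_walkE // s_open sx.
  rewrite open_from_fwd open_from_cat walk_end_detour open_from_detour open_from_fwd.
  rewrite cqW wW /=.
  apply/andP; split; apply/allP => u /mem_belast.
    by case/x_desc => xu /connect_trans/(_ cy); apply: between_notin_W.
  by case/c_desc; apply: between_notin_W.
- have not_fwd : ~~ all is_fwd (map fst (detour c (rcons q w) ++ run Fwd p3)).
    by rewrite map_cat all_cat negb_and detour_not_fwd.
  apply/negP => /(ends_with_dir_seg_catr not_fwd)/ends_with_dir_seg_mem.
  rewrite pre_c map_cat map_snd_run inE mem_cat => x_in.
  suff /(desc_causal_neq_x cC) : connect d c x by rewrite eqxx.
  case/or3P: x_in => [/eqP -> | /mem_detour/(path_connect cqw) // | x_p3].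
    exact: connect0.
  by apply: (path_connect cp3); rewrite inE x_p3 orbT.
Qed.

Lemma desc_causal_notin_Z c a : c \in causal G x y -> connect d c a -> a \notin Z.
Proof.
move=> cC /connectP[p cp ->]; apply/negP => pZ.
move: (cC); rewrite in_causal => /and3P[_ /connectP[p3 cp3 y3] _].
have c_desc u : u \in (c :: p) ++ p3 -> connect d c u.
  rewrite mem_cat => /orP[/(path_connect cp) // | u_p3].
  by apply: (path_connect cp3); rewrite inE u_p3 orbT.
have descW u : u \in (c :: p) ++ p3 -> u \notin W.
  by move/c_desc; apply: desc_causal_notin_W.
apply: no_open_to_y; exists (last c p), (back_run c p ++ run Fwd p3).
rewrite walk_end_cat walk_end_back_run walk_end_run -y3.
rewrite is_walk_cat is_walk_back_run walk_end_back_run is_walk_fwd cp cp3.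
split => //.
- rewrite open_walkE; last by apply: descW; rewrite mem_cat mem_last.
  rewrite open_from_cat walk_end_back_run open_from_fwd open_from_back_run.
    apply/allP => u /mem_belast; rewrite inE => /orP[/eqP ->|u_p3]; apply: descW.
      by rewrite mem_cat mem_head.
    by rewrite mem_cat u_p3 orbT.
  by apply/allP => u u_in; apply: descW; rewrite mem_cat u_in.
- apply/negP => /ends_with_dir_seg_mem; rewrite map_cat !map_snd_run inE mem_cat mem_rev.
  move=> x_in; suff /(desc_causal_neq_x cC) : connect d c x by rewrite eqxx.
  apply: c_desc; rewrite mem_cat.
  by case/or3P: x_in => [/eqP ->|/mem_belast ->|->]; rewrite ?mem_last ?orbT.
Qed.

Lemma forb_disjoint : x \notin Z -> x \notin W -> [disjoint Z :|: W & forb G x y].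
Proof.
move=> xZ xW; rewrite disjoint_subset; apply/subsetP => a aZW; rewrite !inE negb_or.
rewrite in_setU in aZW; apply/andP; split.
  apply/bigcupP => -[c cC]; rewrite inE => ca.
  case/orP: aZW; apply/negP.
    exact: desc_causal_notin_Z cC ca.
  exact: desc_causal_notin_W cC ca.
by apply: contraTneq aZW => ->; rewrite negb_or xZ xW.
Qed.

End Sufficiency.
End Main.

Theorem mainTheorem2 (V : finType) (G : ADMG V) (x y : V) (Z W : {set V}) :
  x != y -> x \notin Z -> x \notin W -> y \notin Z -> y \notin W ->
  [disjoint Z & W] ->
  valid_cond_instr G x y Z W <->
  [/\ (* (i) *)
      ~ (exists p : seq V, dir_path G x y p /\ has (fun v => v \in W) (x :: p)),
      (* (ii) *)
      (exists (z : V) (s : seq (etype * V)),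
         [/\ z \in Z, walk_end z s = x, is_walk (dir G) (bid G) z s
           & open_walk W z s]) &
      (* (iii) *)
      ~ (exists (z : V) (s : seq (etype * V)),
         [/\ z \in Z, walk_end z s = y, is_walk (dir G) (bid G) z s,
             open_walk W z s & ~~ ends_with_dir_seg x z s])].
Proof.
move=> xy xZ xW _ _ ZW; have bsym := bid_sym G; split.
- case=> forb_ZW /(dconn1P bsym) open_x sep_y; split => //.
    exact: no_dir_path_through_W forb_ZW.
  case=> z [s [zZ sy sw s_open s_not_ends]].
  rewrite open_walkE ?(disjointFr ZW zZ) // in s_open.
  have [t [tw t_open ty]] := open_walk_tilde forb_ZW sw s_open sy s_not_ends.
  apply: sep_y; apply/(dconn1P bsym); exists z, t.
  by split => //; exact: open_from_walk t_open.
- case=> no_path open_x no_open_y; split.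
  + exact: forb_disjoint no_path open_x no_open_y ZW xZ xW.
  + exact/(dconn1P bsym).
  + case/(dconn1P bsym) => z [s [zZ sy sw s_open]].
    apply: no_open_y; exists z, s; split => //.
      exact: is_walk_sub (@dir_tilde_sub _ G x y) sw.
    exact: tilde_walk_not_ends xy sw sy.
Qed.
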